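(* Let $0<\beta<\alpha<1$, let $\Pi:\{0,1\}^n\times\{0,1\}^n\to S$ be a subcube-like protocol of codimension $d=\mathrm{codim}(\Pi)$ with $d\le(\alpha-\beta)^2 r\Delta/4$, and let $G_1=([m],[n],E_1)$, $G_2=([m],[n],E_2)$ be two $(r,\Delta,\alpha\Delta)$-expanders. Then there exist families $\{\mathrm{Cl}^X(v)\}_{v\in\mathcal N(\Pi)}$ and $\{\mathrm{Cl}^Y(v)\}_{v\in\mathcal N(\Pi)}$ of subsets of $[m]$ such that: (1) for every non-root node $v$ with parent $u$, $\mathrm{Cl}^X(u)\subseteq\mathrm{Cl}^X(v)$ and $\mathrm{Cl}^Y(u)\subseteq\mathrm{Cl}^Y(v)$; (2) for every $v$, the graphs $G_1-\mathrm{Cl}^X(v)-N_{G_1}(\mathrm{Cl}^X(v))-\mathrm{fix}(X_v)$ and $G_2-\mathrm{Cl}^Y(v)-N_{G_2}(\mathrm{Cl}^Y(v))-\mathrm{fix}(Y_v)$ (vertex deletions on the left and right sides) are both $(r,\Delta,\beta\Delta)$-expanders; (3) for every $v$, $|\mathrm{Cl}^X(v)|,|\mathrm{Cl}^Y(v)|\le\frac{1}{\alpha-\beta}\cdot\frac{d}{\Delta}$.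
   Context: $\mathcal N(\Pi)$ is the set of nodes of the protocol tree of $\Pi$; node $v$ has rectangle $R_v=X_v\times Y_v$. A bipartite graph $G=(L,R,E)$ is an $(r,\Delta,\alpha\Delta)$-expander if every vertex of $L$ has degree at most $\Delta$ and every $S\subseteq L$ with $|S|\le r$ has $|N(S)|\ge\alpha\Delta|S|$. A random $\bm x\in\{0,1\}^n$ is $\gamma$-spread if $\mathbf H_\infty(\bm x_I)\ge\gamma|I|$ for all $I\subseteq[n]$; it is $(I,\gamma)$-structured if $\bm x_I$ is fixed with probability 1 and $\bm x_{[n]\setminus I}$ is $\gamma$-spread. A rectangle $X\times Y$ is subcube-like w.r.t. $(I,J)$ if uniform $\bm x\sim X$ is $(I,\gamma)$-structured and uniform $\bm y\sim Y$ is $(J,\gamma)$-structured (for some $\gamma>0$); $\mathrm{fix}(X)=I$, $\mathrm{fix}(Y)=J$, $\mathrm{codim}(X\times Y)=|I|+|J|$. A protocol is subcube-like if every node rectangle is; its codimension is the maximum over nodes. *)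

From mathcomp Require Import all_boot.
From Stdlib Require Import Reals.
Set Implicit Arguments. Unset Strict Implicit. Unset Printing Implicit Defensive.

Definition bv (n : nat) := {ffun 'I_n -> bool}.

(* Deterministic two-party protocol trees: Alice nodes branch on a bit
   computed from x, Bob nodes on a bit computed from y, leaves output in S. *)
Inductive protocol (n : nat) (S : Type) : Type :=
| PLeaf of S
| PAlice of (bv n -> bool) & protocol n S & protocol n S
| PBob of (bv n -> bool) & protocol n S & protocol n S.
Arguments PLeaf {n S}.
Arguments PAlice {n S}.
Arguments PBob {n S}.

(* Nodes of the protocol tree = paths from the root (list of bits, root first;
   the children of node p are rcons p false / rcons p true). *)
Fixpoint nodes n S (P : protocol n S) : seq (seq bool) :=
  match P with
  | PLeaf _ => [:: [::]]
  | PAlice _ t0 t1 | PBob _ t0 t1 =>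
      [::] :: map (cons false) (nodes t0) ++ map (cons true) (nodes t1)
  end.

Fixpoint rectX n S (P : protocol n S) (p : seq bool) : {set bv n} :=
  match P, p with
  | PAlice f t0 t1, b :: q => [set x | f x == b] :&: rectX (if b then t1 else t0) q
  | PBob _ t0 t1, b :: q => rectX (if b then t1 else t0) q
  | _, _ => setT
  end.

Fixpoint rectY n S (P : protocol n S) (p : seq bool) : {set bv n} :=
  match P, p with
  | PAlice _ t0 t1, b :: q => rectY (if b then t1 else t0) q
  | PBob g t0 t1, b :: q => [set y | g y == b] :&: rectY (if b then t1 else t0) q
  | _, _ => setT
  end.

Definition log2 (x : R) : R := (ln x / ln 2)%R.

Definition agree n (I : {set 'I_n}) (x x0 : bv n) : bool :=
  [forall i in I, x i == x0 i].

(* min-entropy of x_I for x uniform on X :  -log2 max_a Pr[x_I = a]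
   (the max over values a realised by X; other values have probability 0). *)
Definition maxprob n (X : {set bv n}) (I : {set 'I_n}) : R :=
  (INR (\max_(x0 in X) #|[set x in X | agree I x x0]|) / INR #|X|)%R.

Definition Hinf n (X : {set bv n}) (I : {set 'I_n}) : R :=
  (- log2 (maxprob X I))%R.

Definition structured n (X : {set bv n}) (I : {set 'I_n}) (gamma : R) : Prop :=
  X != set0 /\
  (forall x y, x \in X -> y \in X -> agree I x y) /\
  (forall I' : {set 'I_n}, I' \subset ~: I ->
     (gamma * INR #|I'| <= Hinf X I')%R).

Definition subcube_like_wrt n (X Y : {set bv n}) (I J : {set 'I_n}) : Prop :=
  exists gamma : R, (0 < gamma)%R /\ structured X I gamma /\ structured Y J gamma.

Definition subcube_like n (X Y : {set bv n}) : Prop :=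
  exists I J, subcube_like_wrt X Y I J.

(* fix(X): the set of coordinates fixed on X (equals I when X is
   (I,gamma)-structured). *)
Definition fixcoords n (X : {set bv n}) : {set 'I_n} :=
  [set i | [forall x in X, forall y in X, x i == y i]].

Definition subcube_like_protocol n S (P : protocol n S) : Prop :=
  forall p, p \in nodes P -> subcube_like (rectX P p) (rectY P p).

Definition codim_node n (X Y : {set bv n}) : nat := #|fixcoords X| + #|fixcoords Y|.

Definition codim n S (P : protocol n S) : nat :=
  \max_(p <- nodes P) codim_node (rectX P p) (rectY P p).

Definition nbr m n (E : 'I_m -> 'I_n -> bool) (A : {set 'I_m}) : {set 'I_n} :=
  [set j | [exists i in A, E i j]].

Definition expander m n (L : {set 'I_m}) (Rt : {set 'I_n})
    (E : 'I_m -> 'I_n -> bool) (r Delta : nat) (c : R) : Prop :=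
  (forall i, i \in L -> #|[set j in Rt | E i j]| <= Delta) /\
  (forall Sv : {set 'I_m}, Sv \subset L -> #|Sv| <= r ->
     (c * INR #|Sv| <= INR #|Rt :&: nbr E Sv|)%R).

Definition expander_del m n (E : 'I_m -> 'I_n -> bool) (A : {set 'I_m})
    (B C : {set 'I_n}) (r Delta : nat) (c : R) : Prop :=
  expander (~: A) (~: (B :|: C)) E r Delta c.

From mathcomp Require Import all_boot.
From Stdlib Require Import Reals Lra Psatz.
Set Implicit Arguments. Unset Strict Implicit. Unset Printing Implicit Defensive.

(* The closures are grown greedily down the protocol tree: Cl(v) is a largest
   superset of Cl(parent) that is sparse for fix(v), i.e. has at most
   beta Delta |C| neighbours outside fix(v) and at most K = d / ((alpha - beta) Delta)
   elements; sparseness is inherited from the parent because fix only grows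
   along a path.  If the graph with Cl(v), N(Cl(v)) and fix(v) deleted had a
   set S, |S| <= r, with fewer than beta Delta |S| neighbours, then alpha-expansion
   of S gives |Cl(v)| + |S| <= r, and alpha-expansion of Cl(v) u S shows that
   Cl(v) u S is again sparse, contradicting maximality. *)

Lemma INR_leq a b : a <= b -> (INR a <= INR b)%R.
Proof. by move/leP; apply: le_INR. Qed.

Lemma nbrU m n (E : 'I_m -> 'I_n -> bool) (A B : {set 'I_m}) :
  nbr E (A :|: B) = nbr E A :|: nbr E B.
Proof.
apply/setP => j; rewrite !inE; apply/existsP/orP.
- by case=> i /andP[]; rewrite inE => /orP[] Hi Hj; [left|right];
    apply/existsP; exists i; rewrite Hi.
- by case=> /existsP[i /andP[Hi Hj]]; exists i; rewrite inE Hi ?orbT.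
Qed.

Lemma nbr0 m n (E : 'I_m -> 'I_n -> bool) : nbr E set0 = set0.
Proof. by apply/setP => j; rewrite !inE; apply/existsP => -[i]; rewrite inE. Qed.

Lemma card_le_setCI (T : finType) (J X : {set T}) : #|X| <= #|~: J :&: X| + #|J|.
Proof.
rewrite -(cardsID J X) addnC setDE setIC leq_add2l.
by rewrite subset_leq_card // subsetIr.
Qed.

Lemma card_setCI_setU (T : finType) (J A B : {set T}) :
  #|~: J :&: (A :|: B)| = #|~: J :&: A| + #|~: (A :|: J) :&: B|.
Proof.
have -> : ~: J :&: (A :|: B) = (~: J :&: A) :|: (~: (A :|: J) :&: B).
  by apply/setP => x; rewrite !inE; case: (x \in A); case: (x \in J).
apply/eqP; rewrite (leq_card_setU (~: J :&: A) _).2 -setI_eq0.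
by apply/eqP/setP => x; rewrite !inE; case: (x \in A); case: (x \in J).
Qed.

Lemma card_setU_disjoint (T : finType) (C S : {set T}) :
  S \subset ~: C -> #|C :|: S| = #|C| + #|S|.
Proof.
move=> sSC; apply/eqP.
by rewrite (leq_card_setU C S).2 disjoint_sym disjoints_subset.
Qed.

Section SparseClosure.

Variables (m n : nat) (E : 'I_m -> 'I_n -> bool) (Delta : nat) (beta K : R).
Implicit Types (J : {set 'I_n}) (C : {set 'I_m}).

(* [Rle_dec] is read as a boolean so that [arg max] applies. *)
Definition sparseb J C : bool :=
  Rle_dec (INR #|~: J :&: nbr E C|) (beta * INR Delta * INR #|C|) &&
  Rle_dec (INR #|C|) K.

Lemma sparseb_set0 J : (0 <= K)%R -> sparseb J set0.
Proof.
move=> K_ge0; apply/andP; split; apply/sumboolP;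
  rewrite ?nbr0 ?setI0 !cards0 /= ?Rmult_0_r; lra.
Qed.

Lemma sparseb_subset J J' C : J \subset J' -> sparseb J C -> sparseb J' C.
Proof.
move=> sJJ' /andP[/sumboolP sparseC smallC]; rewrite /sparseb smallC andbT.
apply/sumboolP; apply: Rle_trans sparseC; apply/le_INR/leP.
by apply/subset_leq_card/setSI; rewrite setCS.
Qed.

Definition closure J (C0 : {set 'I_m}) : {set 'I_m} :=
  if sparseb J C0 then [arg max_(C > C0 | (C0 \subset C) && sparseb J C) #|C|]
  else C0.

Lemma sub_closure J (C0 : {set 'I_m}) : C0 \subset closure J C0.
Proof.
rewrite /closure; case: ifP => // sparseC0.
by case: arg_maxnP => [|C /andP[]//]; rewrite subxx.
Qed.

Lemma closure_sparse J (C0 : {set 'I_m}) : sparseb J C0 ->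
  sparseb J (closure J C0) /\
  forall C, closure J C0 \subset C -> sparseb J C -> #|C| <= #|closure J C0|.
Proof.
rewrite /closure => sparseC0; rewrite sparseC0.
case: arg_maxnP => [|C /andP[sC0C sparseC] maxC]; first by rewrite subxx.
split=> // C' sCC' sparseC'; apply: maxC.
by rewrite sparseC' (subset_trans sC0C sCC').
Qed.

Variable Jnode : seq bool -> {set 'I_n}.

(* The path is read leaf-first, so that extending it is a [cons]. *)
Fixpoint closure_rev (l : seq bool) : {set 'I_m} :=
  if l is _ :: l' then closure (Jnode (rev l)) (closure_rev l')
  else closure (Jnode [::]) set0.

Definition node_closure (p : seq bool) : {set 'I_m} := closure_rev (rev p).

Lemma node_closure_rcons p b :
  node_closure (rcons p b) = closure (Jnode (rcons p b)) (node_closure p).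
Proof. by rewrite /node_closure rev_rcons /= rev_cons revK. Qed.

Lemma sub_node_closure p b : node_closure p \subset node_closure (rcons p b).
Proof. by rewrite node_closure_rcons sub_closure. Qed.

Hypotheses (Jnode_mono : forall p b, Jnode p \subset Jnode (rcons p b))
           (K_ge0 : (0 <= K)%R).

Lemma node_closure_sparse p :
  sparseb (Jnode p) (node_closure p) /\
  forall C, node_closure p \subset C -> sparseb (Jnode p) C ->
    #|C| <= #|node_closure p|.
Proof.
suff [C0 [sparseC0 ->]] : exists C0, sparseb (Jnode p) C0 /\
    node_closure p = closure (Jnode p) C0 by apply: closure_sparse.
elim/last_ind: p => [|q b [C0 [sparseC0 ncq]]].
  by exists set0; split; [apply: sparseb_set0|].
exists (node_closure q); rewrite node_closure_rcons; split=> //; rewrite ncq.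
exact: sparseb_subset (Jnode_mono q b) (closure_sparse sparseC0).1.
Qed.

End SparseClosure.

Section Arithmetic.

Variables (alpha beta D K : R).
Hypotheses (beta_lt_alpha : (beta < alpha)%R) (D_gt0 : (0 < D)%R).

(* [a], [b], [j]: neighbours of [C] outside [J], new neighbours of [S],
   size of [J]; [c], [s]: sizes of [C] and [S]. *)
Lemma sparse_union_small (r j a b c s : R) :
  (0 < beta)%R -> (alpha < 1)%R -> (K <= (alpha - beta) * r / 4)%R ->
  (j <= (alpha - beta) * D * K)%R -> (0 <= c)%R -> (c <= K)%R ->
  (a <= beta * D * c)%R -> (b < beta * D * s)%R ->
  (alpha * D * s <= a + b + j)%R -> (c + s <= r)%R.
Proof.
move=> beta_gt0 alpha_lt1 K_le j_le c_ge0 c_le a_le b_lt exp_s.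
have s_lt : ((alpha - beta) * s < alpha * K)%R.
  have cK : (beta * D * c <= beta * D * K)%R by apply: Rmult_le_compat_l; nra.
  apply: (Rmult_lt_reg_l D) => //; lra.
have aK : (alpha * K <= K)%R by nra.
have : ((alpha - beta) * s < (alpha - beta) * (r / 4))%R by lra.
move/(Rmult_lt_reg_l (alpha - beta) _ _ ltac:(lra)); nra.
Qed.

Lemma sparse_union_le (j a b c s : R) :
  (j <= (alpha - beta) * D * K)%R ->
  (a <= beta * D * c)%R -> (b < beta * D * s)%R ->
  (alpha * D * (c + s) <= a + b + j)%R -> (c + s <= K)%R.
Proof.
move=> j_le a_le b_lt exp_cs.
apply: Rlt_le; apply: (Rmult_lt_reg_l ((alpha - beta) * D)); nra.
Qed.

End Arithmetic.

Section Expansion.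

Variables (m n : nat) (E : 'I_m -> 'I_n -> bool) (alpha beta : R) (r Delta d : nat).
Hypotheses (beta_gt0 : (0 < beta)%R) (beta_lt_alpha : (beta < alpha)%R)
  (alpha_lt1 : (alpha < 1)%R)
  (d_le : (INR d <= (alpha - beta) ^ 2 * INR r * INR Delta / 4)%R)
  (expE : expander [set: 'I_m] [set: 'I_n] E r Delta (alpha * INR Delta)%R).

Implicit Types (J : {set 'I_n}) (C S : {set 'I_m}).

Let K := (/ (alpha - beta) * (INR d / INR Delta))%R.

Lemma K_ge0 : (0 <= K)%R.
Proof.
rewrite /K; have [->|Delta_gt0] := posnP Delta.
  by rewrite Rdiv_0_r Rmult_0_r; lra.
apply: Rmult_le_pos; first by apply/Rlt_le/Rinv_0_lt_compat; lra.
apply/Rmult_le_pos/Rlt_le/Rinv_0_lt_compat/lt_0_INR/ltP => //; exact: pos_INR.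
Qed.

Lemma sparseb_setU J C S : #|J| <= d -> sparseb E Delta beta K J C ->
  S \subset ~: C -> #|S| <= r ->
  (INR #|~: (nbr E C :|: J) :&: nbr E S| < beta * INR Delta * INR #|S|)%R ->
  sparseb E Delta beta K J (C :|: S).
Proof.
move=> J_le /andP[/sumboolP sparseC /sumboolP smallC] sSC S_le fewS.
have Delta_gt0 : (0 < INR Delta)%R.
  case: (posnP Delta) fewS => [->|/ltP/lt_0_INR //].
  by have := pos_INR #|~: (nbr E C :|: J) :&: nbr E S|; rewrite /= !Rmult_0_r; lra.
have eDK : ((alpha - beta) * INR Delta * K = INR d)%R.
  by rewrite /K; field; lra.
have K_le : (K <= (alpha - beta) * INR r / 4)%R.
  apply: (Rmult_le_reg_l ((alpha - beta) * INR Delta)); first by nra.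
  by rewrite eDK; lra.
have J_le' : (INR #|J| <= (alpha - beta) * INR Delta * K)%R.
  by rewrite eDK; exact: INR_leq.
have cardN := card_setCI_setU J (nbr E C) (nbr E S); rewrite -nbrU in cardN.
have cardNS : #|nbr E S| <= #|~: J :&: nbr E (C :|: S)| + #|J|.
  apply: leq_trans (card_le_setCI J _) _; rewrite leq_add2r.
  by apply/subset_leq_card/setIS; rewrite nbrU subsetUr.
have [_ expCS] := expE; have [_ expS] := expE.
have {}expS := expS S (subsetT S) S_le; rewrite setTI in expS.
have := INR_leq cardNS; rewrite cardN !plus_INR => NS_le.
have CS_le : #|C :|: S| <= r.
  apply/leP/INR_le; rewrite card_setU_disjoint // plus_INR.
  apply: (sparse_union_small beta_lt_alpha Delta_gt0 beta_gt0 alpha_lt1 K_le J_le'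
            (pos_INR _) smallC sparseC fewS); lra.
have {}expCS := expCS _ (subsetT (C :|: S)) CS_le; rewrite setTI in expCS.
have := INR_leq (card_le_setCI J (nbr E (C :|: S))); rewrite cardN !plus_INR => NCS_le.
rewrite /sparseb cardN card_setU_disjoint // !plus_INR in expCS *.
apply/andP; split; apply/sumboolP; first by lra.
apply: (sparse_union_le beta_lt_alpha Delta_gt0 J_le' sparseC fewS); lra.
Qed.

Lemma expander_del_maximal J C : #|J| <= d -> sparseb E Delta beta K J C ->
  (forall C', C \subset C' -> sparseb E Delta beta K J C' -> #|C'| <= #|C|) ->
  expander_del E C (nbr E C) J r Delta (beta * INR Delta).
Proof.
move=> J_le sparseC maxC; have [degE _] := expE; split.
  move=> i _; apply: leq_trans (degE i (in_setT i)).
  by apply/subset_leq_card/subsetP => j; rewrite !inE => /andP[_ ->].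
move=> S sSC S_le.
case: (Rle_lt_dec (beta * INR Delta * INR #|S|)
        (INR #|~: (nbr E C :|: J) :&: nbr E S|)) => // fewS.
have := maxC _ (subsetUl C S) (sparseb_setU J_le sparseC sSC S_le fewS).
rewrite card_setU_disjoint // -{2}(addn0 #|C|) leq_add2l leqn0 cards_eq0.
move/eqP=> S0; move: fewS; rewrite S0 nbr0 setI0 !cards0 /= Rmult_0_r; lra.
Qed.

Lemma node_closure_expander (Jnode : seq bool -> {set 'I_n}) p :
  (forall q b, Jnode q \subset Jnode (rcons q b)) -> #|Jnode p| <= d ->
  let C := node_closure E Delta beta K Jnode p in
  expander_del E C (nbr E C) (Jnode p) r Delta (beta * INR Delta) /\
  (INR #|C| <= K)%R.
Proof.
move=> Jnode_mono J_le /=.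
have [sparseC maxC] := node_closure_sparse E Delta beta Jnode_mono K_ge0 p.
split; first exact: expander_del_maximal.
by case/andP: sparseC => _ /sumboolP.
Qed.

End Expansion.

Lemma rectX_rcons_subset n S (P : protocol n S) p b :
  rectX P (rcons p b) \subset rectX P p.
Proof.
elim: P p => [s|f t0 IH0 t1 IH1|f t0 IH0 t1 IH1] [|c q] //=; rewrite ?subsetT //.
  by apply: setIS; case: c.
by case: c.
Qed.

Lemma rectY_rcons_subset n S (P : protocol n S) p b :
  rectY P (rcons p b) \subset rectY P p.
Proof.
elim: P p => [s|f t0 IH0 t1 IH1|f t0 IH0 t1 IH1] [|c q] //=; rewrite ?subsetT //.
  by case: c.
by apply: setIS; case: c.
Qed.

Lemma fixcoordsS n (X X' : {set bv n}) :
  X' \subset X -> fixcoords X \subset fixcoords X'.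
Proof.
move=> sX'X; apply/subsetP => i; rewrite !inE => /forall_inP fixX.
apply/forall_inP => x /(subsetP sX'X) Xx; apply/forall_inP => y /(subsetP sX'X) Xy.
by move/forall_inP: (fixX x Xx) => /(_ y Xy).
Qed.

Lemma card_fixcoords_le_codim n S (P : protocol n S) p : p \in nodes P ->
  #|fixcoords (rectX P p)| <= codim P /\ #|fixcoords (rectY P p)| <= codim P.
Proof.
move=> Pp; have := @leq_bigmax_seq _ (nodes P) xpredT
  (fun q => codim_node (rectX P q) (rectY P q)) p Pp isT.
rewrite /codim_node => le_codim.
by split; apply: leq_trans le_codim; rewrite ?leq_addr ?leq_addl.
Qed.

Theorem mainTheorem6 (n m : nat) (S : Type) (Pi : protocol n S)
    (alpha beta : R) (r Delta : nat) (E1 E2 : 'I_m -> 'I_n -> bool) :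
  (0 < beta)%R -> (beta < alpha)%R -> (alpha < 1)%R ->
  subcube_like_protocol Pi ->
  (INR (codim Pi) <= (alpha - beta) ^ 2 * INR r * INR Delta / 4)%R ->
  expander [set: 'I_m] [set: 'I_n] E1 r Delta (alpha * INR Delta)%R ->
  expander [set: 'I_m] [set: 'I_n] E2 r Delta (alpha * INR Delta)%R ->
  exists ClX ClY : seq bool -> {set 'I_m},
    (forall (p : seq bool) (b : bool), rcons p b \in nodes Pi ->
        ClX p \subset ClX (rcons p b) /\ ClY p \subset ClY (rcons p b)) /\
    (forall p, p \in nodes Pi ->
        expander_del E1 (ClX p) (nbr E1 (ClX p)) (fixcoords (rectX Pi p))
          r Delta (beta * INR Delta)%R /\
        expander_del E2 (ClY p) (nbr E2 (ClY p)) (fixcoords (rectY Pi p))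
          r Delta (beta * INR Delta)%R) /\
    (forall p, p \in nodes Pi ->
        (INR #|ClX p| <= / (alpha - beta) * (INR (codim Pi) / INR Delta))%R /\
        (INR #|ClY p| <= / (alpha - beta) * (INR (codim Pi) / INR Delta))%R).
Proof.
move=> beta_gt0 beta_lt_alpha alpha_lt1 _ codim_le expE1 expE2.
set K := (/ (alpha - beta) * (INR (codim Pi) / INR Delta))%R.
pose JX p := fixcoords (rectX Pi p); pose JY p := fixcoords (rectY Pi p).
have JX_mono p b : JX p \subset JX (rcons p b) by apply/fixcoordsS/rectX_rcons_subset.
have JY_mono p b : JY p \subset JY (rcons p b) by apply/fixcoordsS/rectY_rcons_subset.
have closureX p := node_closure_expander
  beta_gt0 beta_lt_alpha alpha_lt1 codim_le expE1 (p := p) JX_mono.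
have closureY p := node_closure_expander
  beta_gt0 beta_lt_alpha alpha_lt1 codim_le expE2 (p := p) JY_mono.
exists (node_closure E1 Delta beta K JX), (node_closure E2 Delta beta K JY).
split; first by move=> p b _; split; apply: sub_node_closure.
split=> p /card_fixcoords_le_codim[JXp JYp];
  by split; [case: (closureX p JXp) | case: (closureY p JYp)].
Qed.
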